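(* Let $\{X_i\}_{i\in\mathbb{N}}$ be compact metric spaces with closed non-empty subsets $A_i\subseteq X_i$, and let $X$ be a compact metric space with a closed non-empty subset $A\subseteq X$. Then the following are equivalent: (1) $(X_i,A_i)\to(X,A)$ in the Gromov--Hausdorff sense of metric pairs; (2) there exist positive numbers $\epsilon_i\to0$ and $\epsilon_i$-Gromov--Hausdorff approximations $f_i\colon X_i\to X$ and $g_i\colon A_i\to A$ such that $d_X(f_i(x),g_i(x))\le\epsilon_i$ for all $x\in A_i$.
   Context: A map $f\colon X\to Y$ between metric spaces is an $\epsilon$-Gromov--Hausdorff approximation if $|d_Y(f(x),f(x'))-d_X(x,x')|\le\epsilon$ for all $x,x'\in X$ and every point of $Y$ lies within distance $\epsilon$ of $f(X)$. For compact metric spaces $X,Y$ with closed non-empty subsets $A\subseteq X$, $B\subseteq Y$, $d_{GH}((X,A),(Y,B))=\inf\max\{d_H^Z(\varphi(X),\psi(Y)),d_H^Z(\varphi(A),\psi(B))\}$, the infimum over metric spaces $Z$ and isometric embeddings $\varphi\colon X\to Z$, $\psi\colon Y\to Z$, with $d_H^Z$ the Hausdorff distance; $(X_i,A_i)\to(X,A)$ means $d_{GH}((X_i,A_i),(X,A))\to0$ (equivalently, there are $\epsilon_i\to0$ and $\epsilon_i$-Gromov--Hausdorff approximations $f_i\colon X_i\to X$ with $d_H(f_i(A_i),A)<\epsilon_i$). *)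

From Stdlib Require Import Reals List.
Open Scope R_scope.

Record MetricSpace := {
  carrier :> Type;
  mdist : carrier -> carrier -> R;
  mdist_eq0 : forall x y, mdist x y = 0 <-> x = y;
  mdist_sym : forall x y, mdist x y = mdist y x;
  mdist_tri : forall x y z, mdist x z <= mdist x y + mdist y z
}.

Arguments mdist {m} x y.

Definition is_open (X : MetricSpace) (U : X -> Prop) : Prop :=
  forall x, U x -> exists r, 0 < r /\ forall y, mdist x y < r -> U y.

Definition is_closed (X : MetricSpace) (A : X -> Prop) : Prop :=
  is_open X (fun x => ~ A x).

Definition is_compact (X : MetricSpace) : Prop :=
  forall (I : Type) (U : I -> X -> Prop),
    (forall i, is_open X (U i)) ->
    (forall x, exists i, U i x) ->
    exists l : list I, forall x, exists i, In i l /\ U i x.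

(** eps-Gromov--Hausdorff approximation f : S -> T, for types S, T carrying
    distance functions dS, dT (used both for spaces and for subspaces). *)
Definition GH_approx {S T : Type} (dS : S -> S -> R) (dT : T -> T -> R)
  (f : S -> T) (eps : R) : Prop :=
  (forall x x', Rabs (dT (f x) (f x') - dS x x') <= eps) /\
  (forall y, exists x, dT y (f x) <= eps).

Definition subdist (X : MetricSpace) (A : X -> Prop)
  (a b : {x : X | A x}) : R := mdist (proj1_sig a) (proj1_sig b).

Definition isometric_embedding (X Z : MetricSpace) (phi : X -> Z) : Prop :=
  forall x y, mdist (phi x) (phi y) = mdist x y.

Definition hausdorff_le (Z : MetricSpace) (S1 S2 : Z -> Prop) (r : R) : Prop :=
  (forall x, S1 x -> forall eta, 0 < eta -> exists y, S2 y /\ mdist x y <= r + eta) /\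
  (forall y, S2 y -> forall eta, 0 < eta -> exists x, S1 x /\ mdist y x <= r + eta).

Definition image {X Z : Type} (phi : X -> Z) (A : X -> Prop) : Z -> Prop :=
  fun z => exists x, A x /\ phi x = z.

Definition GH_pair_dist_lt (X : MetricSpace) (A : X -> Prop)
  (Y : MetricSpace) (B : Y -> Prop) (eps : R) : Prop :=
  exists (Z : MetricSpace) (phi : X -> Z) (psi : Y -> Z) (r : R),
    isometric_embedding X Z phi /\ isometric_embedding Y Z psi /\ r < eps /\
    hausdorff_le Z (image phi (fun _ => True)) (image psi (fun _ => True)) r /\
    hausdorff_le Z (image phi A) (image psi B) r.

Definition GH_pair_converges (Xs : nat -> MetricSpace) (As : forall i, Xs i -> Prop)
  (X : MetricSpace) (A : X -> Prop) : Prop :=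
  forall eps, 0 < eps -> exists N, forall i, (N <= i)%nat ->
    GH_pair_dist_lt (Xs i) (As i) X A eps.

From Stdlib Require Import Reals Lra Lia Classical ClassicalEpsilon List.
Open Scope R_scope.

(* If (X_i, A_i) and (X, A) sit isometrically in a common space Z within Hausdorff
   distance r < e, sending each point of X_i (resp. A_i) to a point of X (resp. A)
   at distance <= e in Z gives 2e-approximations f_i, g_i that are 2e-close on A_i.
   Conversely, an e-approximation f with distortion <= 2c, c = e/2, glues X_i and X
   into one metric space on X_i + X, with d(x, y) = inf_a (d(x, a) + d(f a, y)) + c;
   there both pairs are within Hausdorff distance 5e/2, the compatibility of g with
   f handling the subsets. Finally, as every pair of compact spaces is approximable
   at some scale, choosing for each i the best admissible scale 1/(k+1) with k <= i
   produces a positive sequence eps_i tending to 0. *)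

Lemma mdist_refl (X : MetricSpace) (x : X) : mdist x x = 0.
Proof. now apply mdist_eq0. Qed.

Lemma mdist_nonneg (X : MetricSpace) (x y : X) : 0 <= mdist x y.
Proof.
  pose proof (mdist_tri X x y x) as Htri.
  rewrite mdist_refl, (mdist_sym X y x) in Htri. lra.
Qed.

Lemma Rabs_le_between (a b : R) : Rabs a <= b -> - b <= a <= b.
Proof.
  intros Hab. pose proof (Rle_abs a). pose proof (Rle_abs (- a)).
  rewrite Rabs_Ropp in *. lra.
Qed.

Lemma inf_of_nonneg (S : Type) (F : S -> R) : S -> (forall a, 0 <= F a) ->
  {m : R | (forall a, m <= F a) /\ (forall L, (forall a, L <= F a) -> L <= m)}.
Proof.
  intros s HF.
  destruct (completeness (fun r => exists a, r = - F a)) as [m [Hub Hleast]].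
  - exists 0. intros r [a ->]. specialize (HF a). lra.
  - exists (- F s). eauto.
  - exists (- m). split.
    + intros a. assert (- F a <= m) by (apply Hub; eauto). lra.
    + intros L HL. enough (m <= - L) by lra.
      apply Hleast. intros r [a ->]. specialize (HL a). lra.
Qed.

Section Glue.
Variables (X Y : MetricSpace) (f : X -> Y) (c : R).

Definition link_dist (x : X) (y : Y) : R :=
  proj1_sig (inf_of_nonneg _ (fun a => mdist x a + mdist (f a) y) x
    (fun a => Rplus_le_le_0_compat _ _ (mdist_nonneg _ _ _) (mdist_nonneg _ _ _))).

Lemma link_dist_le x y a : link_dist x y <= mdist x a + mdist (f a) y.
Proof. exact (proj1 (proj2_sig (inf_of_nonneg _ _ _ _)) a). Qed.

Lemma link_dist_ge x y L :
  (forall a, L <= mdist x a + mdist (f a) y) -> L <= link_dist x y.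
Proof. exact (proj2 (proj2_sig (inf_of_nonneg _ _ _ _)) L). Qed.

Lemma link_dist_le_image x y : link_dist x y <= mdist (f x) y.
Proof. pose proof (link_dist_le x y x). rewrite mdist_refl in *. lra. Qed.

Lemma link_dist_nonneg x y : 0 <= link_dist x y.
Proof.
  apply link_dist_ge. intros a.
  pose proof (mdist_nonneg _ x a). pose proof (mdist_nonneg _ (f a) y). lra.
Qed.

Lemma link_dist_tri_l x x' y : link_dist x y <= mdist x x' + link_dist x' y.
Proof.
  enough (link_dist x y - mdist x x' <= link_dist x' y) by lra.
  apply link_dist_ge. intros a.
  pose proof (link_dist_le x y a). pose proof (mdist_tri X x x' a). lra.
Qed.

Lemma link_dist_tri_r x y y' : link_dist x y <= link_dist x y' + mdist y' y.
Proof.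
  enough (link_dist x y - mdist y' y <= link_dist x y') by lra.
  apply link_dist_ge. intros a.
  pose proof (link_dist_le x y a). pose proof (mdist_tri Y (f a) y' y). lra.
Qed.

Hypothesis c_pos : 0 < c.
Hypothesis f_distortion : forall a b, Rabs (mdist (f a) (f b) - mdist a b) <= 2 * c.

Lemma link_dist_sum_ge_l x x' y :
  mdist x x' <= link_dist x y + link_dist x' y + 2 * c.
Proof.
  enough (mdist x x' - 2 * c - link_dist x y <= link_dist x' y) by lra.
  apply link_dist_ge. intros b.
  enough (mdist x x' - 2 * c - (mdist x' b + mdist (f b) y) <= link_dist x y) by lra.
  apply link_dist_ge. intros a.
  pose proof (Rabs_le_between _ _ (f_distortion a b)).
  pose proof (mdist_tri X x a x'). pose proof (mdist_tri X a b x').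
  pose proof (mdist_tri Y (f a) y (f b)).
  rewrite (mdist_sym Y y (f b)), (mdist_sym X b x') in *. lra.
Qed.

Lemma link_dist_sum_ge_r x y y' :
  mdist y y' <= link_dist x y + link_dist x y' + 2 * c.
Proof.
  enough (mdist y y' - 2 * c - link_dist x y <= link_dist x y') by lra.
  apply link_dist_ge. intros b.
  enough (mdist y y' - 2 * c - (mdist x b + mdist (f b) y') <= link_dist x y) by lra.
  apply link_dist_ge. intros a.
  pose proof (Rabs_le_between _ _ (f_distortion a b)).
  pose proof (mdist_tri Y y (f a) y'). pose proof (mdist_tri Y (f a) (f b) y').
  pose proof (mdist_tri X a x b).
  rewrite (mdist_sym X a x), (mdist_sym Y y (f a)) in *. lra.
Qed.

(* Only the two mixed triangles X-Y-X and Y-X-Y need the distortion bound on [f]. *)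
Definition glue_dist (p q : X + Y) : R :=
  match p, q with
  | inl x, inl x' => mdist x x'
  | inr y, inr y' => mdist y y'
  | inl x, inr y | inr y, inl x => link_dist x y + c
  end.

Lemma glue_dist_eq0 p q : glue_dist p q = 0 <-> p = q.
Proof.
  destruct p as [x|y], q as [x'|y']; simpl;
    try (rewrite mdist_eq0; split; [intros ->| intros Heq; injection Heq]; auto).
  - pose proof (link_dist_nonneg x y'). split; [lra | discriminate].
  - pose proof (link_dist_nonneg x' y). split; [lra | discriminate].
Qed.

Lemma glue_dist_sym p q : glue_dist p q = glue_dist q p.
Proof. destruct p, q; simpl; auto using mdist_sym. Qed.

Lemma glue_dist_tri p q r : glue_dist p r <= glue_dist p q + glue_dist q r.
Proof.
  destruct p as [x|y], q as [x1|y1], r as [x2|y2]; simpl.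
  - apply mdist_tri.
  - pose proof (link_dist_tri_l x x1 y2). lra.
  - pose proof (link_dist_sum_ge_l x x2 y1). lra.
  - pose proof (link_dist_tri_r x y2 y1). lra.
  - pose proof (link_dist_tri_l x2 x1 y). rewrite (mdist_sym X x2 x1) in *. lra.
  - pose proof (link_dist_sum_ge_r x1 y y2). lra.
  - pose proof (link_dist_tri_r x2 y y1). rewrite (mdist_sym Y y1 y) in *. lra.
  - apply mdist_tri.
Qed.

Definition glue : MetricSpace :=
  {| carrier := X + Y; mdist := glue_dist; mdist_eq0 := glue_dist_eq0;
     mdist_sym := glue_dist_sym; mdist_tri := glue_dist_tri |}.

Lemma glue_dist_image_le x y : @mdist glue (inl x) (inr y) <= mdist (f x) y + c.
Proof. pose proof (link_dist_le_image x y). simpl. lra. Qed.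

End Glue.

Lemma hausdorff_le_of_near (Z : MetricSpace) (S1 S2 : Z -> Prop) (r : R) :
  (forall x, S1 x -> exists y, S2 y /\ mdist x y <= r) ->
  (forall y, S2 y -> exists x, S1 x /\ mdist y x <= r) ->
  hausdorff_le Z S1 S2 r.
Proof.
  intros H12 H21. split.
  - intros x Hx eta Heta. destruct (H12 x Hx) as [y [Hy Hxy]]. exists y. split; [exact Hy | lra].
  - intros y Hy eta Heta. destruct (H21 y Hy) as [x [Hx Hyx]]. exists x. split; [exact Hx | lra].
Qed.

Lemma hausdorff_le_near_l (Z : MetricSpace) (S1 S2 : Z -> Prop) (r s : R) :
  hausdorff_le Z S1 S2 r -> r < s -> forall x, S1 x -> exists y, S2 y /\ mdist x y <= s.
Proof.
  intros [H12 _] Hrs x Hx. destruct (H12 x Hx (s - r)) as [y [Hy Hxy]]; [lra|].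
  exists y. split; [exact Hy | lra].
Qed.

Lemma hausdorff_le_near_r (Z : MetricSpace) (S1 S2 : Z -> Prop) (r s : R) :
  hausdorff_le Z S1 S2 r -> r < s -> forall y, S2 y -> exists x, S1 x /\ mdist y x <= s.
Proof.
  intros [_ H21] Hrs y Hy. destruct (H21 y Hy (s - r)) as [x [Hx Hyx]]; [lra|].
  exists x. split; [exact Hx | lra].
Qed.

Lemma mdist_shift_le (Z : MetricSpace) (p p' q q' : Z) (e : R) :
  mdist p q <= e -> mdist p' q' <= e -> Rabs (mdist q q' - mdist p p') <= 2 * e.
Proof.
  intros Hpq Hpq'. apply Rabs_le.
  pose proof (mdist_tri Z q p q'). pose proof (mdist_tri Z p p' q').
  pose proof (mdist_tri Z p q p'). pose proof (mdist_tri Z q q' p').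
  rewrite (mdist_sym Z q p), (mdist_sym Z q' p') in *. lra.
Qed.

Lemma GH_pair_dist_lt_mono (Y : MetricSpace) (B : Y -> Prop) (X : MetricSpace) (A : X -> Prop)
  (e e' : R) : e <= e' -> GH_pair_dist_lt Y B X A e -> GH_pair_dist_lt Y B X A e'.
Proof.
  intros Hee' [Z [phi [psi [r [Hphi [Hpsi [Hr HH]]]]]]].
  exists Z, phi, psi, r. split; [exact Hphi|]. split; [exact Hpsi|]. split; [lra | exact HH].
Qed.

Definition GH_pair_approx {Y X : MetricSpace} {B : Y -> Prop} {A : X -> Prop}
  (f : Y -> X) (g : {y | B y} -> {x | A x}) (e : R) : Prop :=
  GH_approx (@mdist Y) (@mdist X) f e /\
  GH_approx (subdist Y B) (subdist X A) g e /\
  (forall y, mdist (f (proj1_sig y)) (proj1_sig (g y)) <= e).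

Definition GH_pair_approximable (Y : MetricSpace) (B : Y -> Prop)
  (X : MetricSpace) (A : X -> Prop) (e : R) : Prop :=
  exists (f : Y -> X) (g : {y | B y} -> {x | A x}), GH_pair_approx f g e.

Lemma GH_pair_dist_lt_of_approx (Y X : MetricSpace) (B : Y -> Prop) (A : X -> Prop)
  (f : Y -> X) (g : {y | B y} -> {x | A x}) (e : R) :
  0 < e -> GH_pair_approx f g e -> GH_pair_dist_lt Y B X A (3 * e).
Proof.
  intros He [[Hfd Hfs] [[Hgd Hgs] Hfg]].
  assert (Hdist : forall a b, Rabs (mdist (f a) (f b) - mdist a b) <= 2 * (e / 2)).
  { intros a b. replace (2 * (e / 2)) with e by field. apply Hfd. }
  assert (Hc : 0 < e / 2) by lra.
  pose proof (glue_dist_image_le Y X f (e / 2) Hc Hdist) as Himage.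
  set (Z := glue Y X f (e / 2) Hc Hdist) in *.
  exists Z, inl, inr, (5 / 2 * e).
  split; [intros y y'; reflexivity|]. split; [intros x x'; reflexivity|].
  split; [lra|]. split; apply hausdorff_le_of_near.
  - intros z [y [_ <-]]. exists (inr (f y)). split; [now exists (f y)|].
    specialize (Himage y (f y)). rewrite mdist_refl in Himage. lra.
  - intros z [x [_ <-]]. destruct (Hfs x) as [y Hy].
    exists (inl y). split; [now exists y|].
    rewrite (mdist_sym Z). specialize (Himage y x). rewrite mdist_sym in Hy. lra.
  - intros z [y [Hy <-]]. set (b := exist _ y Hy).
    exists (inr (proj1_sig (g b))).
    split; [exists (proj1_sig (g b)); split; [apply proj2_sig | reflexivity]|].
    specialize (Himage y (proj1_sig (g b))). specialize (Hfg b). simpl in Hfg. lra.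
  - intros z [x [Hx <-]]. destruct (Hgs (exist _ x Hx)) as [b Hb]. unfold subdist in Hb.
    exists (inl (proj1_sig b)).
    split; [exists (proj1_sig b); split; [apply proj2_sig | reflexivity]|].
    rewrite (mdist_sym Z). specialize (Himage (proj1_sig b) x). specialize (Hfg b).
    pose proof (mdist_tri X (f (proj1_sig b)) (proj1_sig (g b)) x).
    rewrite (mdist_sym X (proj1_sig (g b)) x) in *. simpl in *. lra.
Qed.

Lemma approximable_of_GH_pair_dist_lt (Y : MetricSpace) (B : Y -> Prop)
  (X : MetricSpace) (A : X -> Prop) (e : R) :
  GH_pair_dist_lt Y B X A e -> GH_pair_approximable Y B X A (2 * e).
Proof.
  intros [Z [phi [psi [r [Hphi [Hpsi [Hr [HX HA]]]]]]]].
  assert (Hf : forall y, exists x, mdist (phi y) (psi x) <= e).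
  { intros y. destruct (hausdorff_le_near_l _ _ _ _ _ HX Hr (phi y)) as [z [[x [_ <-]] Hz]].
    - now exists y.
    - now exists x. }
  assert (Hg : forall b : {y | B y}, exists a : {x | A x},
             mdist (phi (proj1_sig b)) (psi (proj1_sig a)) <= e).
  { intros [y Hy]. destruct (hausdorff_le_near_l _ _ _ _ _ HA Hr (phi y)) as [z [[x [Hx <-]] Hz]].
    - now exists y.
    - now exists (exist _ x Hx). }
  destruct (choice _ Hf) as [f Hfp]. destruct (choice _ Hg) as [g Hgp].
  exists f, g. split; [split | split; [split|]].
  - intros y y'. rewrite <- Hphi, <- Hpsi. now apply mdist_shift_le.
  - intros x. destruct (hausdorff_le_near_r _ _ _ _ _ HX Hr (psi x)) as [z [[y [_ <-]] Hz]].
    { now exists x. }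
    exists y. rewrite <- Hpsi. specialize (Hfp y).
    pose proof (mdist_tri Z (psi x) (phi y) (psi (f y))). lra.
  - intros b b'. unfold subdist. rewrite <- Hphi, <- Hpsi. now apply mdist_shift_le.
  - intros [x Hx]. destruct (hausdorff_le_near_r _ _ _ _ _ HA Hr (psi x)) as [z [[y [Hy <-]] Hz]].
    { now exists x. }
    exists (exist B y Hy). unfold subdist. rewrite <- Hpsi. specialize (Hgp (exist B y Hy)).
    pose proof (mdist_tri Z (psi x) (phi y) (psi (proj1_sig (g (exist B y Hy))))).
    simpl in *. lra.
  - intros b. rewrite <- Hpsi. pose proof (Hgp b). pose proof (Hfp (proj1_sig b)).
    pose proof (mdist_tri Z (psi (f (proj1_sig b))) (phi (proj1_sig b)) (psi (proj1_sig (g b)))).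
    rewrite (mdist_sym Z (psi (f (proj1_sig b))) (phi (proj1_sig b))) in *. lra.
Qed.

Lemma list_upper_bound (T : Type) (F : T -> R) (l : list T) :
  exists M, forall t, In t l -> F t <= M.
Proof.
  induction l as [|a l [M HM]].
  - exists 0. intros t [].
  - exists (Rmax (F a) M). intros t [<- | Ht].
    + apply Rmax_l.
    + eapply Rle_trans; [now apply HM | apply Rmax_r].
Qed.

Lemma compact_bounded (X : MetricSpace) :
  is_compact X -> X -> exists M, forall x y : X, mdist x y <= M.
Proof.
  intros HK x0.
  destruct (HK X (fun c x => mdist c x < 1)) as [centers Hcover].
  - intros c x Hx. exists (1 - mdist c x). split; [lra|].
    intros y Hy. pose proof (mdist_tri X c x y). lra.
  - intros x. exists x. rewrite mdist_refl. lra.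
  - destruct (list_upper_bound X (fun c => mdist x0 c) centers) as [M HM].
    assert (Hball : forall x, mdist x0 x <= M + 1).
    { intros x. destruct (Hcover x) as [c [Hc Hcx]]. specialize (HM c Hc).
      pose proof (mdist_tri X x0 c x). lra. }
    exists (2 * (M + 1)). intros x y. pose proof (Hball x). pose proof (Hball y).
    pose proof (mdist_tri X x x0 y). rewrite (mdist_sym X x x0) in *. lra.
Qed.

Lemma GH_approx_const {S T : Type} (dS : S -> S -> R) (dT : T -> T -> R) (t0 : T) (e : R) :
  S -> dT t0 t0 = 0 -> (forall x x', 0 <= dS x x' <= e) -> (forall y, dT y t0 <= e) ->
  GH_approx dS dT (fun _ => t0) e.
Proof.
  intros s0 Ht0 HS HT. split.
  - intros x x'. rewrite Ht0, Rminus_0_l, Rabs_Ropp, Rabs_pos_eq; apply HS.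
  - intros y. now exists s0.
Qed.

Lemma GH_pair_approximable_coarse (Y : MetricSpace) (B : Y -> Prop)
  (X : MetricSpace) (A : X -> Prop) :
  is_compact Y -> (exists y, B y) -> is_compact X -> (exists x, A x) ->
  exists e, 0 < e /\ GH_pair_approximable Y B X A e.
Proof.
  intros HY [y0 Hy0] HX [x0 Hx0].
  destruct (compact_bounded Y HY y0) as [MY HMY].
  destruct (compact_bounded X HX x0) as [MX HMX].
  pose proof (mdist_nonneg Y y0 y0). pose proof (HMY y0 y0).
  pose proof (mdist_nonneg X x0 x0). pose proof (HMX x0 x0).
  exists (MY + MX + 1). split; [lra|].
  exists (fun _ => x0), (fun _ => exist A x0 Hx0). split; [|split].
  - apply GH_approx_const; [exact y0 | apply mdist_refl | |].
    + intros y y'. pose proof (HMY y y'). pose proof (mdist_nonneg Y y y'). lra.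
    + intros x. pose proof (HMX x x0). lra.
  - apply GH_approx_const; [exact (exist B y0 Hy0) | apply mdist_refl | |].
    + intros b b'. unfold subdist.
      pose proof (HMY (proj1_sig b) (proj1_sig b')).
      pose proof (mdist_nonneg Y (proj1_sig b) (proj1_sig b')). lra.
    + intros a. unfold subdist. pose proof (HMX (proj1_sig a) x0). simpl. lra.
  - intros b. simpl. rewrite mdist_refl. lra.
Qed.

Lemma exists_best_level (P : R -> Prop) (e0 : R) : 0 < e0 -> P e0 -> forall m,
  exists e, 0 < e /\ P e /\
    forall k, (k < m)%nat -> P (/ INR (S k)) -> e <= / INR (S k).
Proof.
  intros He0 HP0 m. induction m as [|m [e [He [HPe Hbest]]]].
  - exists e0. split; [exact He0|]. split; [exact HP0|]. intros k Hk. lia.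
  - destruct (classic (P (/ INR (S m)))) as [HPm | HPm].
    + exists (/ INR (S m)). split; [apply Rinv_0_lt_compat, lt_0_INR; lia|].
      split; [exact HPm|]. intros k Hk _.
      apply Rinv_le_contravar; [apply lt_0_INR; lia | apply le_INR; lia].
    + exists e. split; [exact He|]. split; [exact HPe|]. intros k Hk HPk.
      destruct (Nat.eq_dec k m) as [-> | Hkm]; [contradiction | apply Hbest; [lia | exact HPk]].
Qed.

Lemma null_sequence_choice (P : nat -> R -> Prop) :
  (forall i, exists e, 0 < e /\ P i e) ->
  (forall d, 0 < d -> exists N, forall i, (N <= i)%nat -> P i d) ->
  exists eps : nat -> R, (forall i, 0 < eps i /\ P i (eps i)) /\ Un_cv eps 0.
Proof.
  intros Hcoarse Hfine.
  assert (Hbest : forall i, exists e, 0 < e /\ P i e /\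
            forall k, (k < S i)%nat -> P i (/ INR (S k)) -> e <= / INR (S k)).
  { intros i. destruct (Hcoarse i) as [e0 [He0 HP0]]. now apply exists_best_level with e0. }
  destruct (choice _ Hbest) as [eps Heps].
  exists eps. split; [intros i; split; apply Heps|].
  intros eta Heta. destruct (archimed_cor1 eta Heta) as [[|k] [Hk Hk0]]; [lia|].
  destruct (Hfine (/ INR (S k))) as [N HN]; [apply Rinv_0_lt_compat, lt_0_INR; lia|].
  exists (Nat.max N k). intros n Hn. unfold Rdist. rewrite Rminus_0_r.
  destruct (Heps n) as [Hpos [_ Hle]].
  rewrite Rabs_pos_eq by lra.
  assert (eps n <= / INR (S k)) by (apply Hle; [lia | apply HN; lia]). lra.
Qed.

Theorem proposition2p1
  (Xs : nat -> MetricSpace) (As : forall i, Xs i -> Prop)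
  (X : MetricSpace) (A : X -> Prop) :
  (forall i, is_compact (Xs i)) ->
  (forall i, is_closed (Xs i) (As i)) ->
  (forall i, exists x, As i x) ->
  is_compact X -> is_closed X A -> (exists x, A x) ->
  (GH_pair_converges Xs As X A <->
   exists (eps : nat -> R)
          (f : forall i, Xs i -> X)
          (g : forall i, {x : Xs i | As i x} -> {y : X | A y}),
     (forall i, 0 < eps i) /\ Un_cv eps 0 /\
     (forall i, GH_approx (@mdist (Xs i)) (@mdist X) (f i) (eps i)) /\
     (forall i, GH_approx (subdist (Xs i) (As i)) (subdist X A) (g i) (eps i)) /\
     (forall i (x : {x : Xs i | As i x}),
        mdist (f i (proj1_sig x)) (proj1_sig (g i x)) <= eps i)).
Proof.
  intros HXs _ HAs HX _ HA. split.
  - intros Hconv.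
    destruct (null_sequence_choice (fun i => GH_pair_approximable (Xs i) (As i) X A))
      as [eps [Heps Hcv]].
    + intros i. now apply GH_pair_approximable_coarse.
    + intros d Hd. destruct (Hconv (d / 2)) as [N HN]; [lra|].
      exists N. intros i Hi. replace d with (2 * (d / 2)) by field.
      now apply approximable_of_GH_pair_dist_lt, HN.
    + set (F i := constructive_indefinite_description _ (proj2 (Heps i))).
      set (G i := constructive_indefinite_description _ (proj2_sig (F i))).
      assert (HFG : forall i, GH_pair_approx (proj1_sig (F i)) (proj1_sig (G i)) (eps i))
        by (intros i; exact (proj2_sig (G i))).
      exists eps, (fun i => proj1_sig (F i)), (fun i => proj1_sig (G i)).
      split; [intros i; apply Heps|]. split; [exact Hcv|].
      split; [|split]; intros i; apply HFG.
  - intros [eps [f [g [Hpos [Hcv [Hf [Hg Hfg]]]]]]] e He.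
    destruct (Hcv (e / 3)) as [N HN]; [lra|]. exists N. intros i Hi.
    specialize (HN i Hi). unfold Rdist in HN.
    rewrite Rminus_0_r, Rabs_pos_eq in HN by apply Rlt_le, Hpos.
    apply GH_pair_dist_lt_mono with (3 * eps i); [lra|].
    apply GH_pair_dist_lt_of_approx with (f i) (g i); [apply Hpos|].
    split; [apply Hf | split; [apply Hg | apply Hfg]].
Qed.
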